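(* Let $\varepsilon_{\mathrm{opt}}<\epsilon$ and $b'=b-\frac{\epsilon-\varepsilon_{\mathrm{opt}}}{2}$. Let $\bar\pi$ be a policy with $\hat V^{\bar\pi}_{r_p}(\rho)\ge\hat V^{\hat\pi^*}_{r_p}(\rho)-\varepsilon_{\mathrm{opt}}$ and $\hat V^{\bar\pi}_c(\rho)\ge b'-\varepsilon_{\mathrm{opt}}$ (e.g. the output $\bar\pi_T$ of the primal-dual algorithm under the conditions of its guarantee). Suppose $$|V^{\bar\pi}_c(\rho)-\hat V^{\bar\pi}_c(\rho)|\le\tfrac{\epsilon-\varepsilon_{\mathrm{opt}}}{2},\quad|V^{\pi^*}_c(\rho)-\hat V^{\pi^*}_c(\rho)|\le\tfrac{\epsilon-\varepsilon_{\mathrm{opt}}}{2},\quad|\hat V^{\pi^*_c}_c(\rho)-V^{\pi^*_c}_c(\rho)|\le\tfrac{\zeta}{4}.$$ Then (a) $V^{\bar\pi}_c(\rho)\ge b-\epsilon$, and (b) $$V^{\pi^*}_r(\rho)-V^{\bar\pi}_r(\rho)\le\frac{2\omega}{1-\gamma}+\varepsilon_{\mathrm{opt}}+|V^{\pi^*}_{r_p}(\rho)-\hat V^{\pi^*}_{r_p}(\rho)|+|\hat V^{\bar\pi}_{r_p}(\rho)-V^{\bar\pi}_{r_p}(\rho)|.$$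
   Context: A discounted CMDP $M=\langle\mathcal S,\mathcal A,\mathcal P,r,c,b,\rho,\gamma\rangle$ with finite state and action sets, reward $r:\mathcal S\times\mathcal A\to[0,1]$, constraint reward $c:\mathcal S\times\mathcal A\to[0,1]$, threshold $b$, initial distribution $\rho$, discount $\gamma\in[0,1)$. $V^\pi_g(\rho)$ is the discounted value of policy $\pi$ for reward $g$ under $\mathcal P$, $s_0\sim\rho$; hats denote values under an empirical kernel $\hat{\mathcal P}$. $r_p=r+\xi$ with $\xi(s,a)\in[0,\omega]$. $\pi^*$ is an optimal policy of $\max_\pi V^\pi_r(\rho)$ s.t. $V^\pi_c(\rho)\ge b$; $\hat\pi^*$ is an optimal policy of $\max_\pi\hat V^\pi_{r_p}(\rho)$ s.t. $\hat V^\pi_c(\rho)\ge b'$. Slater constant $\zeta=\max_\pi V^\pi_c(\rho)-b$; $\pi^*_c\in\arg\max_\pi V^\pi_c(\rho)$. *)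

From HB Require Import structures.
From mathcomp Require Import all_boot all_order all_algebra.
From mathcomp Require Import all_classical all_reals all_analysis.
Set Implicit Arguments. Unset Strict Implicit. Unset Printing Implicit Defensive.
Import Order.TTheory GRing.Theory Num.Theory numFieldNormedType.Exports.
Local Open Scope ring_scope.

Section CMDP.
Variables (R : realType) (S A : finType).

Definition is_dist (T : finType) (p : T -> R) : Prop :=
  (forall x, 0 <= p x) /\ \sum_(x : T) p x = 1.

(* a transition kernel: P s a s' = Pr(s' | s, a) *)
Definition is_kernel (P : S -> A -> S -> R) : Prop :=
  forall s a, is_dist (P s a).

(* a (stationary, possibly randomized) policy: pi s a = pi(a | s) *)
Definition is_policy (pi : S -> A -> R) : Prop :=
  forall s, is_dist (pi s).

(* distribution of s_t when s_0 ~ rho, a_t ~ pi(.|s_t), s_{t+1} ~ P(.|s_t,a_t) *)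
Fixpoint state_dist (P : S -> A -> S -> R) (pi : S -> A -> R) (rho : S -> R)
  (t : nat) : S -> R :=
  match t with
  | 0%N => rho
  | t'.+1 => fun s' => \sum_(s : S) \sum_(a : A)
      state_dist P pi rho t' s * pi s a * P s a s'
  end.

Definition exp_reward (P : S -> A -> S -> R) (pi : S -> A -> R) (rho : S -> R)
  (g : S -> A -> R) (t : nat) : R :=
  \sum_(s : S) \sum_(a : A) state_dist P pi rho t s * pi s a * g s a.

Definition value (P : S -> A -> S -> R) (gamma : R) (pi : S -> A -> R)
  (g : S -> A -> R) (rho : S -> R) : R :=
  limn (series (fun t => gamma ^+ t * exp_reward P pi rho g t)).

End CMDP.

From HB Require Import structures.
From mathcomp Require Import all_boot all_order all_algebra.
From mathcomp Require Import all_classical all_reals all_analysis.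
From mathcomp Require Import lra.
Set Implicit Arguments. Unset Strict Implicit. Unset Printing Implicit Defensive.
Import Order.TTheory GRing.Theory Num.Theory numFieldNormedType.Exports.
Local Open Scope ring_scope.

(* Part (a) chains the two constraint bounds on pibar.  For (b), the
   constraint accuracy at pi^* makes pi^* feasible for the empirical problem
   with threshold b', hence Vh^pi*_rp <= Vh^pihat*_rp <= Vh^pibar_rp + eps_opt;
   passing between V and Vh at pi^* and pibar costs the two deviation terms,
   and replacing rp by r costs at most V^pibar_xi <= omega / (1 - gamma). *)

Section DiscountedValue.
Variables (R : realType) (S A : finType).
Variables (P : S -> A -> S -> R) (rho : S -> R) (gamma : R).

Lemma sum_dist_policy (d : S -> R) (pi : S -> A -> R) :
  is_dist d -> is_policy pi -> \sum_s \sum_a d s * pi s a = 1.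
Proof.
move=> [_ d1] Hpi; rewrite -d1; apply: eq_bigr => s _.
by rewrite -mulr_sumr; case: (Hpi s) => _ ->; rewrite mulr1.
Qed.

Hypotheses (HP : is_kernel P) (Hrho : is_dist rho).

Lemma state_dist_is_dist (pi : S -> A -> R) t :
  is_policy pi -> is_dist (state_dist P pi rho t).
Proof.
move=> Hpi; elim: t => [|t IH] //=; split.
- move=> s'; apply: sumr_ge0 => s _; apply: sumr_ge0 => a _.
  by rewrite !mulr_ge0 //; [case: IH | case: (Hpi s) | case: (HP s a)].
- rewrite -(sum_dist_policy IH Hpi) exchange_big /=; apply: eq_bigr => s _.
  rewrite exchange_big /=; apply: eq_bigr => a _.
  by rewrite -mulr_sumr; case: (HP s a) => _ ->; rewrite mulr1.
Qed.

Lemma exp_reward_bounded (pi : S -> A -> R) (g : S -> A -> R) M t :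
  is_policy pi -> (forall s a, 0 <= g s a <= M) ->
  0 <= exp_reward P pi rho g t <= M.
Proof.
move=> Hpi Hg; have [d0 _] := state_dist_is_dist t Hpi.
have w0 s a : 0 <= state_dist P pi rho t s * pi s a.
  by rewrite mulr_ge0 //; case: (Hpi s).
apply/andP; split.
  apply: sumr_ge0 => s _; apply: sumr_ge0 => a _.
  by rewrite mulr_ge0 //; case/andP: (Hg s a).
rewrite -[leRHS]mul1r -(sum_dist_policy (state_dist_is_dist t Hpi) Hpi).
rewrite mulr_suml; apply: ler_sum => s _; rewrite mulr_suml.
by apply: ler_sum => a _; apply: ler_wpM2l => //; case/andP: (Hg s a).
Qed.

Lemma exp_rewardD (pi : S -> A -> R) (g h : S -> A -> R) t :
  exp_reward P pi rho (fun s a => g s a + h s a) t =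
  exp_reward P pi rho g t + exp_reward P pi rho h t.
Proof.
rewrite /exp_reward -big_split; apply: eq_bigr => s _.
by rewrite -big_split; apply: eq_bigr => a _; rewrite mulrDr.
Qed.

Hypothesis (Hgamma : 0 <= gamma < 1).

Let discounted (pi : S -> A -> R) (g : S -> A -> R) t :=
  gamma ^+ t * exp_reward P pi rho g t.

Let norm_gamma_lt1 : `|gamma| < 1.
Proof. by case/andP: Hgamma => g0 g1; rewrite ger0_norm. Qed.

Section BoundedReward.
Variables (pi : S -> A -> R) (g : S -> A -> R) (M : R).
Hypotheses (Hpi : is_policy pi) (Hg : forall s a, 0 <= g s a <= M).

Let discounted_ge0 t : 0 <= discounted pi g t.
Proof.
case/andP: Hgamma => g0 _.
by rewrite mulr_ge0 ?exprn_ge0 //; case/andP: (exp_reward_bounded t Hpi Hg).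
Qed.

Let discounted_le_geometric t : discounted pi g t <= geometric M gamma t.
Proof.
case/andP: Hgamma => g0 _; rewrite /discounted /= mulrC.
by apply: ler_wpM2r; [exact: exprn_ge0 | case/andP: (exp_reward_bounded t Hpi Hg)].
Qed.

Lemma discounted_series_cvg : cvgn (series (discounted pi g)).
Proof.
apply: (series_le_cvg discounted_ge0 _ discounted_le_geometric).
  by move=> n; exact: le_trans (discounted_ge0 n) (discounted_le_geometric n).
exact: is_cvg_geometric_series.
Qed.

Lemma value_bounded : 0 <= value P gamma pi g rho <= M / (1 - gamma).
Proof.
apply/andP; split.
  apply: limr_ge discounted_series_cvg _; apply: nearW => n.
  by apply: sumr_ge0 => k _; exact: discounted_ge0.
rewrite -(cvg_lim _ (@cvg_geometric_series R M gamma norm_gamma_lt1)) //.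
apply: ler_lim discounted_series_cvg
  (@is_cvg_geometric_series R M gamma norm_gamma_lt1) _.
by apply: nearW => n; apply: ler_sum => k _; exact: discounted_le_geometric.
Qed.

End BoundedReward.

Lemma valueD (pi : S -> A -> R) (g h : S -> A -> R) M N :
  is_policy pi -> (forall s a, 0 <= g s a <= M) -> (forall s a, 0 <= h s a <= N) ->
  value P gamma pi (fun s a => g s a + h s a) rho =
  value P gamma pi g rho + value P gamma pi h rho.
Proof.
move=> Hpi Hg Hh; rewrite /value -lim_seriesD;
  [|exact: discounted_series_cvg Hpi Hg|exact: discounted_series_cvg Hpi Hh].
by congr (limn (series _)); apply/funext => t; rewrite /= exp_rewardD mulrDr.
Qed.

End DiscountedValue.

Theorem mainTheorem8 (R : realType) (S A : finType)
  (P Phat : S -> A -> S -> R) (r c xi : S -> A -> R) (b : R) (rho : S -> R)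
  (gamma omega eps eps_opt b' zeta : R)
  (pistar pihatstar pistarc pibar : S -> A -> R) :
  is_kernel P -> is_kernel Phat -> is_dist rho ->
  (forall s a, 0 <= r s a <= 1) -> (forall s a, 0 <= c s a <= 1) ->
  (forall s a, 0 <= xi s a <= omega) ->
  0 <= gamma < 1 ->
  let rp := fun s a => r s a + xi s a in
  let V := value P gamma in
  let Vh := value Phat gamma in
  (* pi^* : optimal policy of the true CMDP with threshold b *)
  is_policy pistar -> V pistar c rho >= b ->
  (forall pi, is_policy pi -> V pi c rho >= b -> V pi r rho <= V pistar r rho) ->
  (* pihat^* : optimal policy of the empirical CMDP with reward r_p and threshold b' *)
  is_policy pihatstar -> Vh pihatstar c rho >= b' ->
  (forall pi, is_policy pi -> Vh pi c rho >= b' -> Vh pi rp rho <= Vh pihatstar rp rho) ->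
  (* pi^*_c maximizes V_c, and zeta is the Slater constant *)
  is_policy pistarc -> (forall pi, is_policy pi -> V pi c rho <= V pistarc c rho) ->
  zeta = V pistarc c rho - b ->
  eps_opt < eps ->
  b' = b - (eps - eps_opt) / 2 ->
  is_policy pibar ->
  Vh pibar rp rho >= Vh pihatstar rp rho - eps_opt ->
  Vh pibar c rho >= b' - eps_opt ->
  `|V pibar c rho - Vh pibar c rho| <= (eps - eps_opt) / 2 ->
  `|V pistar c rho - Vh pistar c rho| <= (eps - eps_opt) / 2 ->
  `|Vh pistarc c rho - V pistarc c rho| <= zeta / 4 ->
  V pibar c rho >= b - eps /\
  V pistar r rho - V pibar r rho <=
    2 * omega / (1 - gamma) + eps_opt
    + `|V pistar rp rho - Vh pistar rp rho|
    + `|Vh pibar rp rho - V pibar rp rho|.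
Proof.
move=> HP _ Hrho Hr _ Hxi Hgamma rp V Vh Hstar Hstar_c _ _ _ Hhatstar_opt
  _ _ _ _ Hb' Hbar Hbar_rp Hbar_c Hbar_dev Hstar_dev _.
have Hstar_feasible : Vh pistar c rho >= b'.
  by move: Hstar_dev; rewrite Hb' ler_norml; lra.
have Hstar_hat := Hhatstar_opt _ Hstar Hstar_feasible.
have dev_star := ler_norm (V pistar rp rho - Vh pistar rp rho).
have dev_bar := ler_norm (Vh pibar rp rho - V pibar rp rho).
have valueD_rp pi : is_policy pi -> V pi rp rho = V pi r rho + V pi xi rho.
  by move=> Hpi; exact: (valueD HP Hrho Hgamma Hpi Hr Hxi).
have Estar := valueD_rp _ Hstar; have Ebar := valueD_rp _ Hbar.
have xi_star_ge0 : 0 <= V pistar xi rho.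
  by case/andP: (value_bounded HP Hrho Hgamma Hstar Hxi).
have /andP[xi_bar_ge0 xi_bar_le] : 0 <= V pibar xi rho <= omega / (1 - gamma).
  exact: (value_bounded HP Hrho Hgamma Hbar Hxi).
split; first by move: Hbar_dev Hbar_c; rewrite Hb' ler_norml; lra.
(* [lra] must treat omega / (1 - gamma) as a single atom. *)
rewrite -mulrA; set K := omega / (1 - gamma) in xi_bar_le *.
clear -Estar Ebar xi_star_ge0 xi_bar_ge0 xi_bar_le dev_star dev_bar Hstar_hat Hbar_rp.
lra.
Qed.
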